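(* $\mathrm{Aut}_{\mathbb Z}(L)$ is equal to each of the groups $\langle -(x\,y)\rangle\ltimes G$, $\langle -(y\,z)\rangle\ltimes G$, $\langle -(z\,x)\rangle\ltimes G$. In particular $\mathrm{Aut}_{\mathbb Z}(L)\cong\mathbb Z_2\ltimes G$.
   Context: $\mathbb F$ is a field of characteristic zero, $\mathfrak{sl}_2$ the Lie algebra of $2\times2$ trace-zero matrices over $\mathbb F$. Equitable basis: $x=\begin{pmatrix}1&0\\0&-1\end{pmatrix}$, $y=\begin{pmatrix}-1&2\\0&1\end{pmatrix}$, $z=\begin{pmatrix}-1&0\\-2&1\end{pmatrix}$, and $L=\mathbb Zx\oplus\mathbb Zy\oplus\mathbb Zz$. Let $x^*=\begin{pmatrix}1&-1\\1&-1\end{pmatrix}$, $y^*=\begin{pmatrix}0&0\\1&0\end{pmatrix}$, $z^*=\begin{pmatrix}0&-1\\0&0\end{pmatrix}$; $G$ is the subgroup of $\mathrm{Aut}_{\mathbb F}(\mathfrak{sl}_2)$ generated by $\exp(\mathrm{ad}\,x^* ),\exp(\mathrm{ad}\,y^* ),\exp(\mathrm{ad}\,z^* )$. $\mathrm{Aut}_{\mathbb Z}(L)$ is the group of Lie algebra automorphisms $\varphi$ of $\mathfrak{sl}_2$ with $\varphi(L)=L$. For distinct $u,v\in\{x,y,z\}$, $(u\,v)$ is the $\mathbb F$-linear map interchanging $u,v$ and fixing the third basis element, and $-(u\,v)$ is its negative. *)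

From HB Require Import structures.
From mathcomp Require Import all_boot all_order all_algebra.
Set Implicit Arguments. Unset Strict Implicit. Unset Printing Implicit Defensive.
Import Order.TTheory GRing.Theory Num.Theory.
Local Open Scope ring_scope.

Section SL2.
Variable F : fieldType.

Definition mx2 (a b c d : F) : 'M[F]_2 :=
  \matrix_(i < 2, j < 2)
    if (i : nat) == 0%N then (if (j : nat) == 0%N then a else b)
    else (if (j : nat) == 0%N then c else d).

Definition in_sl2 (M : 'M[F]_2) : Prop := \tr M = 0.
Definition lie (M N : 'M[F]_2) : 'M[F]_2 := M *m N - N *m M.

Definition ex : 'M[F]_2 := mx2 1 0 0 (-1).
Definition ey : 'M[F]_2 := mx2 (-1) 2 0 1.
Definition ez : 'M[F]_2 := mx2 (-1) 0 (-2) 1.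
Definition bas (j : 'I_3) : 'M[F]_2 :=
  match val j with 0 => ex | 1 => ey | _ => ez end.

(** Coordinates of a trace-zero matrix [[a,b],[c,-a]] in the basis (x,y,z):
    M = alpha x + beta y + gamma z with beta = b/2, gamma = -c/2,
    alpha = a + b/2 - c/2. *)
Definition coord (M : 'M[F]_2) : 'cV[F]_3 :=
  \col_(i < 3)
    match val i with
    | 0 => M 0 0 + M 0 1 / 2%:R - M 1 0 / 2%:R
    | 1 => M 0 1 / 2%:R
    | _ => - (M 1 0 / 2%:R)
    end.

(** An F-linear endomorphism of sl2 is represented by its 3x3 matrix A
    in the basis (x,y,z):  phi(b_j) = sum_i A i j b_i.  Composition of maps
    corresponds to matrix product. *)
Definition lin (A : 'M[F]_3) (M : 'M[F]_2) : 'M[F]_2 :=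
  \sum_(i < 3) (A *m coord M) i 0 *: bas i.

Definition mat_of (f : 'I_3 -> 'M[F]_2) : 'M[F]_3 :=
  \matrix_(i < 3, j < 3) coord (f j) i 0.

Definition LieAut (A : 'M[F]_3) : Prop :=
  A \in unitmx /\
  (forall M N, in_sl2 M -> in_sl2 N -> lin A (lie M N) = lie (lin A M) (lin A N)).

Definition inL (M : 'M[F]_2) : Prop :=
  exists a b c : int, M = a%:~R *: ex + b%:~R *: ey + c%:~R *: ez.

Definition AutZ (A : 'M[F]_3) : Prop :=
  LieAut A /\
  (forall M, inL M -> inL (lin A M)) /\
  (forall N, inL N -> exists M, inL M /\ lin A M = N).

Definition ad_mx (a : 'M[F]_2) : 'M[F]_3 := mat_of (fun j => lie a (bas j)).

(** exponential of a nilpotent 3x3 matrix N (N^3 = 0, so the series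
    sum_k N^k/k! stops at k = 2) *)
Definition exp_nil (N : 'M[F]_3) : 'M[F]_3 :=
  \sum_(k < 3) (k`!%:R)^-1 *: N ^+ k.

Definition xs : 'M[F]_2 := mx2 1 (-1) 1 (-1).
Definition ys : 'M[F]_2 := mx2 0 0 1 0.
Definition zs : 'M[F]_2 := mx2 0 (-1) 0 0.

Inductive gen (S : 'M[F]_3 -> Prop) : 'M[F]_3 -> Prop :=
  | gen_one : gen S 1
  | gen_base a : S a -> gen S a
  | gen_inv a : gen S a -> gen S (invmx a)
  | gen_mul a b : gen S a -> gen S b -> gen S (a *m b).

(** G = < exp(ad xs), exp(ad ys), exp(ad zs) >, xs = x^*, etc. *)
Definition Ggrp : 'M[F]_3 -> Prop :=
  gen (fun a => a = exp_nil (ad_mx xs) \/ a = exp_nil (ad_mx ys)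
                \/ a = exp_nil (ad_mx zs)).

Definition neg_swap (u v : 'I_3) : 'M[F]_3 :=
  mat_of (fun j => - bas (if j == u then v else if j == v then u else j)).

End SL2.

(* In the basis (x, y, z) the bracket has the integral structure constants
   [x,y] = 2x + 2y, [y,z] = 2y + 2z, [z,x] = 2z + 2x, so the whole argument
   takes place with integer 3x3 matrices (the record imat); the field F only
   enters through the embedding toF of integer matrices into 'M[F]_3.

   G corresponds to the words Gint in six "letters" (the matrices
      of exp(ad x^* ), exp(ad y^* ), exp(ad z^* ) and their inverses).  A descent
      on the image a x + b y + c z of the nilpotent element x + y, which
      satisfies (a - b - c)^2 = 4bc, shows that every automorphism of the Lie
      ring L lies in G or in G iD for an explicit automorphism iD (descent).
      Each involution s = -(u v) squares to 1, normalises G, maps iD into G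
      and lies outside G, as G reduced mod 3 has 12 elements none of which is
      s mod 3; hence Aut(L) = G u sG (iaut_decomp).
   2. Transfer to F (characteristic 0).  toF is injective and multiplicative,
      Aut_Z(L) is the image of the automorphisms of the Lie ring L (AutZE), G
      is the image of Gint (GgrpE) and -(u v) is the image of one of the three
      integral involutions (neg_swap_toF). *)

From Pilot Require Import Defs.
From HB Require Import structures.
From mathcomp Require Import all_boot all_order all_algebra.
From mathcomp Require Import ring zify.
Import Order.TTheory GRing.Theory Num.Theory.
Set Implicit Arguments. Unset Strict Implicit. Unset Printing Implicit Defensive.
Local Open Scope ring_scope.

(* Integer vectors and 3x3 matrices in coordinates w.r.t. (x, y, z), as plain
   records so that products of explicit matrices compute by evaluation; as in
   Defs, the columns of a matrix are the images of x, y, z. *)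
Record ivec := IVec { v0 : int; v1 : int; v2 : int }.
Record imat := IMat { m00 : int; m01 : int; m02 : int;
                      m10 : int; m11 : int; m12 : int;
                      m20 : int; m21 : int; m22 : int }.

Definition imulv (A : imat) (u : ivec) : ivec :=
  IVec (m00 A * v0 u + m01 A * v1 u + m02 A * v2 u)
       (m10 A * v0 u + m11 A * v1 u + m12 A * v2 u)
       (m20 A * v0 u + m21 A * v1 u + m22 A * v2 u).

Definition imul (A B : imat) : imat :=
  IMat (m00 A * m00 B + m01 A * m10 B + m02 A * m20 B)
       (m00 A * m01 B + m01 A * m11 B + m02 A * m21 B)
       (m00 A * m02 B + m01 A * m12 B + m02 A * m22 B)
       (m10 A * m00 B + m11 A * m10 B + m12 A * m20 B)
       (m10 A * m01 B + m11 A * m11 B + m12 A * m21 B)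
       (m10 A * m02 B + m11 A * m12 B + m12 A * m22 B)
       (m20 A * m00 B + m21 A * m10 B + m22 A * m20 B)
       (m20 A * m01 B + m21 A * m11 B + m22 A * m21 B)
       (m20 A * m02 B + m21 A * m12 B + m22 A * m22 B).

Definition ione : imat := IMat 1 0 0 0 1 0 0 0 1.

Lemma imulA : associative imul.
Proof. by do 3!case=> ? ? ? ? ? ? ? ? ?; rewrite /imul /=; congr IMat; ring. Qed.
Lemma imul1m : left_id ione imul.
Proof. by case=> ? ? ? ? ? ? ? ? ?; rewrite /imul /=; congr IMat; ring. Qed.
Lemma imulm1 : right_id ione imul.
Proof. by case=> ? ? ? ? ? ? ? ? ?; rewrite /imul /=; congr IMat; ring. Qed.
Lemma imulv1 u : imulv ione u = u.
Proof. by case: u => ? ? ?; rewrite /imulv /=; congr IVec; ring. Qed.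
Lemma imulvA A B u : imulv (imul A B) u = imulv A (imulv B u).
Proof.
case: A B u => [? ? ? ? ? ? ? ? ?] [? ? ? ? ? ? ? ? ?] [? ? ?].
by rewrite /imulv /=; congr IVec; ring.
Qed.

(* The bracket of L in coordinates: [x,y] = 2x+2y, [y,z] = 2y+2z, [z,x] = 2z+2x. *)
Definition ibr (u w : ivec) : ivec :=
  let xy := v0 u * v1 w - v1 u * v0 w in
  let yz := v1 u * v2 w - v2 u * v1 w in
  let zx := v2 u * v0 w - v0 u * v2 w in
  IVec (2 * (xy + zx)) (2 * (xy + yz)) (2 * (yz + zx)).

Definition ilie (B : imat) : Prop :=
  forall u w, imulv B (ibr u w) = ibr (imulv B u) (imulv B w).
Definition iunit (B : imat) : Prop :=
  exists C, imul B C = ione /\ imul C B = ione.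
Definition iaut (B : imat) : Prop := ilie B /\ iunit B.

Lemma iaut_mul A B : iaut A -> iaut B -> iaut (imul A B).
Proof.
move=> [lieA [A' [AA' A'A]]] [lieB [B' [BB' B'B]]]; split.
  by move=> u w; rewrite !imulvA lieB lieA.
exists (imul B' A'); split.
  by rewrite imulA -(imulA A) BB' imulm1.
by rewrite imulA -(imulA B') A'A imulm1.
Qed.

(* The letters: the matrices of the generators exp(ad x^* ), exp(ad y^* ),
   exp(ad z^* ) of G (see exp_ad_xs below) and of their inverses. *)
Inductive letter := LX | LY | LZ | LX' | LY' | LZ'.

Definition letter_mx (l : letter) : imat :=
  match l with
  | LX => IMat 1 0 0 2 2 (-1) 0 1 0
  | LY => IMat 0 0 1 0 1 0 (-1) 2 2
  | LZ => IMat 2 (-1) 2 1 0 0 0 0 1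
  | LX' => IMat 1 0 0 0 0 1 2 (-1) 2
  | LY' => IMat 2 2 (-1) 0 1 0 1 0 0
  | LZ' => IMat 0 1 0 (-1) 2 2 0 0 1
  end.

Definition letter_inv (l : letter) : letter :=
  match l with LX => LX' | LY => LY' | LZ => LZ' | LX' => LX | LY' => LY | LZ' => LZ end.

Lemma letter_invK l :
  imul (letter_mx l) (letter_mx (letter_inv l)) = ione /\
  imul (letter_mx (letter_inv l)) (letter_mx l) = ione.
Proof. by case: l. Qed.

Lemma iaut_letter l : iaut (letter_mx l).
Proof.
split; last by exists (letter_mx (letter_inv l)); apply: letter_invK.
by case: l => -[? ? ?] [? ? ?]; rewrite /imulv /ibr /=; congr IVec; ring.
Qed.

Inductive Gint : imat -> Prop :=
  | Gint1 : Gint ione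
  | GintM l B : Gint B -> Gint (imul (letter_mx l) B).

Lemma Gint_letter l : Gint (letter_mx l).
Proof. by rewrite -[letter_mx l]imulm1; do !constructor. Qed.

Lemma Gint_mul A B : Gint A -> Gint B -> Gint (imul A B).
Proof. by elim=> [|l A' _ IH] GB; rewrite ?imul1m // -imulA; constructor; apply: IH. Qed.

Lemma Gint_inv A : Gint A -> exists A', [/\ Gint A', imul A A' = ione & imul A' A = ione].
Proof.
elim=> [|l A' _ [A'' [GA'' AA'' A''A]]]; first by exists ione; split; [constructor|by []|by []].
have [li il] := letter_invK l.
exists (imul A'' (letter_mx (letter_inv l))); split.
- by apply: Gint_mul => //; apply: Gint_letter.
- by rewrite imulA -(imulA (letter_mx l)) AA'' imulm1.
- by rewrite imulA -(imulA A'') il imulm1.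
Qed.

Lemma iaut_one : iaut ione.
Proof.
by split; [case=> ? ? ? [? ? ?]; rewrite /imulv /ibr /=; congr IVec; ring | exists ione].
Qed.

Lemma Gint_iaut B : Gint B -> iaut B.
Proof. by elim=> [|l B' _]; [exact: iaut_one | apply: iaut_mul; apply: iaut_letter]. Qed.

Definition iD : imat := IMat 1 (-2) (-2) 0 (-1) 0 0 0 (-1).

Definition reducible (B : imat) : Prop :=
  exists w, Gint w /\ (imul w B = ione \/ imul w B = iD).

Lemma reducible_letter l B : reducible (imul (letter_mx l) B) -> reducible B.
Proof.
case=> w [Gw E]; exists (imul w (letter_mx l)); rewrite -imulA; split=> //.
by apply: Gint_mul => //; apply: Gint_letter.
Qed.

Definition vx : ivec := IVec 1 0 0.
Definition vy : ivec := IVec 0 1 0.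
Definition vz : ivec := IVec 0 0 1.
Definition vxy : ivec := IVec 1 1 0.

Lemma iunit_inj B u : iunit B -> imulv B u = IVec 0 0 0 -> u = IVec 0 0 0.
Proof.
case=> C [_ CB] Bu.
have : imulv (imul C B) u = imulv C (IVec 0 0 0) by rewrite imulvA Bu.
rewrite CB; case: u C {CB Bu} => [? ? ?] [? ? ? ? ? ? ? ? ?].
by rewrite /imulv /= => -[? ? ?]; congr IVec; lia.
Qed.

(* An element n with [p, n] = 2n is nilpotent: for n = a x + b y + c z the
   determinant of the corresponding matrix vanishes, (a - b - c)^2 = 4bc. *)
Lemma eigen2_nilpotent p n : ibr p n = IVec (2 * v0 n) (2 * v1 n) (2 * v2 n) ->
  (v0 n - v1 n - v2 n) ^+ 2 = 4 * v1 n * v2 n.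
Proof.
case: p n => p0 p1 p2 [a b c]; rewrite /ibr /= => -[H0 H1 H2].
have key : 2 * (2 * a - 2 * b - 2 * c) * (a - b - c) - 4 * (2 * b) * c - 4 * (2 * c) * b = 0.
  by rewrite -H0 -H1 -H2; ring.
by nia.
Qed.

(* Since [x, x + y] = 2(x + y), the image of x + y under an automorphism is nilpotent. *)
Lemma image_xy_nilpotent B : ilie B ->
  (v0 (imulv B vxy) - v1 (imulv B vxy) - v2 (imulv B vxy)) ^+ 2
    = 4 * v1 (imulv B vxy) * v2 (imulv B vxy).
Proof.
move=> lieB; apply: (@eigen2_nilpotent (imulv B vx)); rewrite -lieB.
by case: B {lieB} => *; rewrite /imulv /ibr /=; congr IVec; ring.
Qed.

(* For a nilpotent a x + b y + c z with b, c != 0 one of the moves b -> a,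
   b -> 2b + 2c - a, c -> 2b + 2c - a, c -> a (performed by the letters LZ,
   LZ', LY, LY') decreases |b| or |c|. *)
Lemma nilpotent_shrink (a b c : int) : (a - b - c) ^+ 2 = 4 * b * c -> b != 0 -> c != 0 ->
  [\/ `|a| < `|b|, `|2 * b + 2 * c - a| < `|b|,
      `|2 * b + 2 * c - a| < `|c| | `|a| < `|c|].
Proof.
move=> nil b0 c0.
have bc0 : b * c != 0 by rewrite mulf_neq0.
have bc_gt0 : 0 < b * c.
  by rewrite lt0r bc0 /=; move: (sqr_ge0 (a - b - c)); rewrite nil; nia.
case: (ltrP 0 b) => ?; case: (ltrP 0 c) => ?; try nia;
case: (ltrP (a - b - c) 0) => ?; case: (lerP `|c| `|b|) => ?.
all: first [apply: Or41; nia | apply: Or42; nia | apply: Or43; nia | apply: Or44; nia].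
Qed.

Lemma fixed_x_line B k : iaut B -> imulv B vx = vx -> imulv B vxy = IVec k k 0 ->
  B = ione \/ B = iD.
Proof.
case=> lieB [C [_ CB]].
have := lieB vx vz; have := lieB vy vz.
case: B C CB {lieB} => b00 b01 b02 b10 b11 b12 b20 b21 b22 [c00 c01 c02 c10 c11 c12 c20 c21 c22].
rewrite /imul /imulv /ibr /ione /= => -[? ? ? ? ? ? ? ? ?] [? ? ?] [? ? ?] [? ? ?] [? ? ?].
have /intUnitRing.unitzPl : (1 + c01) * k = 1 by nia.
by rewrite qualifE => /pred2P[] ?; [left | right]; congr IMat; nia.
Qed.

(* The letters LZ', LZ fix x + y and shift the image (1 + t) x + t y of x to
   t -+ 1; repeating this brings t to 0. *)
Lemma translate_x B k t : iaut B -> imulv B vx = IVec (1 + t) t 0 ->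
  imulv B vxy = IVec k k 0 -> reducible B.
Proof.
have [N] := ubnP `|t|%N; elim: N B t => // N IH B t ltN autB Bx Bxy.
have [t0 | tn0] := eqVneq t 0.
  rewrite t0 addr0 in Bx.
  by exists ione; split; [constructor | rewrite imul1m; apply: fixed_x_line Bx Bxy].
have [l [t' [lt' Ex Exy]]] : exists l t', [/\ (`|t'| < `|t|)%N,
    imulv (letter_mx l) (IVec (1 + t) t 0) = IVec (1 + t') t' 0 &
    imulv (letter_mx l) (IVec k k 0) = IVec k k 0].
  case: (ltrP 0 t) => [t_gt0 | t_le0].
    by exists LZ', (t - 1); split; [lia | rewrite /imulv /=; congr IVec; ring ..].
  by exists LZ, (t + 1); split; [lia | rewrite /imulv /=; congr IVec; ring ..].
apply: (@reducible_letter l); apply: (IH _ t') => //.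
- by lia.
- by apply: iaut_mul => //; apply: iaut_letter.
- by rewrite imulvA Bx.
- by rewrite imulvA Bxy.
Qed.

(* If x + y is mapped to k(x + y), the relation [x, x + y] = 2(x + y) forces
   x to be mapped to (1 + t) x + t y. *)
Lemma line_case B k : iaut B -> k != 0 -> imulv B vxy = IVec k k 0 -> reducible B.
Proof.
move=> autB k0 Bxy; apply: (translate_x (t := v1 (imulv B vx)) autB _ Bxy).
have := autB.1 vx vxy; move: Bxy; case: B {autB} => b00 b01 b02 b10 b11 b12 b20 b21 b22.
rewrite /imulv /ibr /= => -[? ? ?] [? ? ?].
have /eqP : k * (b00 - b10 + b20 - 1) = 0 by lia.
have /eqP : k * (b00 - b10 - b20 - 1) = 0 by lia.
rewrite !mulf_eq0 (negPf k0) /= !subr_eq0 => /eqP ? /eqP ?.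
by congr IVec; lia.
Qed.

(* Every automorphism of L is reducible: with a x + b y + c z the image of
   x + y, decrease |b| + |c| by letters until b = 0 or c = 0; nilpotency then
   gives a multiple of x + y (after the letter LX if b = 0), and line_case. *)
Theorem descent B : iaut B -> reducible B.
Proof.
have [N] := ubnP (`|v1 (imulv B vxy)| + `|v2 (imulv B vxy)|)%N.
elim: N B => // N IH B ltN autB.
have nil := image_xy_nilpotent autB.1.
have nz : imulv B vxy <> IVec 0 0 0 by move/(iunit_inj autB.2).
move: ltN nil nz; case Bxy : (imulv B vxy) => [a b c] /= ltN nil nz.
have [c0 | c0] := eqVneq c 0.
  have ab : a = b by move: nil; rewrite c0; nia.
  have b0 : b != 0 by apply/eqP=> b0; apply: nz; rewrite ab b0 c0.
  by apply: (line_case autB b0); rewrite Bxy ab c0.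
have [b0 | b0] := eqVneq b 0.
  have ac : a = c by move: nil; rewrite b0; nia.
  apply: (@reducible_letter LX); apply: (@line_case _ c _ c0).
    exact: iaut_mul (iaut_letter _) autB.
  by rewrite imulvA Bxy /imulv /= ac b0; congr IVec; ring.
have [l ltl] : exists l,
    (`|v1 (imulv (letter_mx l) (IVec a b c))| + `|v2 (imulv (letter_mx l) (IVec a b c))|
      < `|b| + `|c|)%N.
  case: (nilpotent_shrink nil b0 c0) => ?; [exists LZ | exists LZ' | exists LY | exists LY'];
  rewrite /imulv /=; lia.
apply: (@reducible_letter l); apply: IH; last exact: iaut_mul (iaut_letter _) autB.
by rewrite imulvA Bxy; lia.
Qed.

Definition iswap_xy : imat := IMat 0 (-1) 0 (-1) 0 0 0 0 (-1).
Definition iswap_yz : imat := IMat (-1) 0 0 0 0 (-1) 0 (-1) 0.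
Definition iswap_zx : imat := IMat 0 0 (-1) 0 (-1) 0 (-1) 0 0.

(* Reduction mod 3: G mod 3 lies in a set G3 of 12 matrices which does not
   contain the reductions of the involutions above.  Membership in G3 is
   decided by computation, for which imat gets a decidable equality. *)
Definition imat_tuple (A : imat) :=
  (m00 A, m01 A, m02 A, m10 A, m11 A, m12 A, m20 A, m21 A, m22 A).
Definition tuple_imat (t : int * int * int * int * int * int * int * int * int) : imat :=
  let: (a, b, c, d, e, f, g, h, k) := t in IMat a b c d e f g h k.
Lemma imat_tupleK : cancel imat_tuple tuple_imat. Proof. by case. Qed.
HB.instance Definition _ := Equality.copy imat (can_type imat_tupleK).

Definition imod3 (A : imat) : imat :=
  IMat (m00 A %% 3)%Z (m01 A %% 3)%Z (m02 A %% 3)%Z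
       (m10 A %% 3)%Z (m11 A %% 3)%Z (m12 A %% 3)%Z
       (m20 A %% 3)%Z (m21 A %% 3)%Z (m22 A %% 3)%Z.

Lemma mod3_dot a0 a1 a2 b0 b1 b2 :
  (a0 * (b0 %% 3)%Z + a1 * (b1 %% 3)%Z + a2 * (b2 %% 3)%Z
     = a0 * b0 + a1 * b1 + a2 * b2 %[mod 3])%Z.
Proof.
apply/eqP; rewrite eqz_mod_dvd.
have e0 := divz_eq b0 3; have e1 := divz_eq b1 3; have e2 := divz_eq b2 3.
set r0 := (b0 %% 3)%Z in e0 *; set r1 := (b1 %% 3)%Z in e1 *; set r2 := (b2 %% 3)%Z in e2 *.
rewrite e0 e1 e2 (_ : _ - _ = - (a0 * (b0 %/ 3)%Z + a1 * (b1 %/ 3)%Z + a2 * (b2 %/ 3)%Z) * 3).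
  exact: dvdz_mull.
ring.
Qed.

Lemma imod3_mul A B : imod3 (imul A B) = imod3 (imul A (imod3 B)).
Proof. by case: A B => [? ? ? ? ? ? ? ? ?] [? ? ? ? ? ? ? ? ?]; congr IMat; rewrite mod3_dot. Qed.

Definition G3 : seq imat :=
  [:: IMat 0 0 1 0 1 0 2 2 2; IMat 0 0 1 1 0 0 0 1 0; IMat 0 0 1 2 2 2 1 0 0;
      IMat 0 1 0 0 0 1 1 0 0; IMat 0 1 0 1 0 0 2 2 2; IMat 0 1 0 2 2 2 0 0 1;
      IMat 1 0 0 0 0 1 2 2 2; IMat 1 0 0 0 1 0 0 0 1; IMat 1 0 0 2 2 2 0 1 0;
      IMat 2 2 2 0 0 1 0 1 0; IMat 2 2 2 0 1 0 1 0 0; IMat 2 2 2 1 0 0 0 0 1].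

Lemma G3_closed l t : t \in G3 -> imod3 (imul (letter_mx l) t) \in G3.
Proof. by move: t; apply/allP; case: l; vm_compute. Qed.

Lemma Gint_mod3 B : Gint B -> imod3 B \in G3.
Proof. by elim=> [|l B' _ IH]; [vm_compute | rewrite imod3_mul G3_closed]. Qed.

(* The properties of an involution s that make Aut(L) = <s> |x G: s is an
   automorphism outside G, normalising G (conjugates of letters are letters)
   and mapping iD into G. *)
Definition complement (s : imat) : Prop :=
  [/\ imul s s = ione, iaut s, ~ Gint s, Gint (imul s iD) &
      forall l, exists l', imul (imul s (letter_mx l)) s = letter_mx l'].

Lemma complement_xy : complement iswap_xy.
Proof.
split=> //; last 2 first.
- by rewrite [imul _ _]/=; apply: (Gint_letter LZ').
- by case; [exists LY' | exists LX' | exists LZ' | exists LY | exists LX | exists LZ].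
- split; last by exists iswap_xy.
  by case=> ? ? ? [? ? ?]; rewrite /imulv /ibr /=; congr IVec; ring.
- by move/Gint_mod3.
Qed.

Lemma complement_yz : complement iswap_yz.
Proof.
split=> //; last 2 first.
- rewrite (_ : imul _ _ = imul (letter_mx LZ) (imul (letter_mx LZ) (letter_mx LX))) //.
  by do 2!apply: GintM; apply: Gint_letter.
- by case; [exists LX' | exists LZ' | exists LY' | exists LX | exists LZ | exists LY].
- split; last by exists iswap_yz.
  by case=> ? ? ? [? ? ?]; rewrite /imulv /ibr /=; congr IVec; ring.
- by move/Gint_mod3.
Qed.

Lemma complement_zx : complement iswap_zx.
Proof.
split=> //; last 2 first.
- by rewrite [imul _ _]/=; apply: (Gint_letter LY).
- by case; [exists LZ' | exists LY' | exists LX' | exists LZ | exists LY | exists LX].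
- split; last by exists iswap_zx.
  by case=> ? ? ? [? ? ?]; rewrite /imulv /ibr /=; congr IVec; ring.
- by move/Gint_mod3.
Qed.

Lemma Gint_conj s B : complement s -> Gint B -> Gint (imul (imul s B) s).
Proof.
case=> ss _ _ _ conj; elim=> [|l B' _ IH]; first by rewrite imulm1 ss; constructor.
have [l' E] := conj l.
have -> : imul (imul s (imul (letter_mx l) B')) s
          = imul (imul (imul s (letter_mx l)) s) (imul (imul s B') s).
  by rewrite -!imulA (imulA s s) ss imul1m.
by rewrite E; constructor.
Qed.

(* Aut(L) = G u sG: by descent, Aut(L) = G u G iD, and G iD = s (sGs) (s iD). *)
Theorem iaut_decomp s B : complement s ->
  iaut B <-> exists B', Gint B' /\ (B = B' \/ B = imul s B').
Proof.
move=> cs; have [ss auts _ GsD _] := cs; split; last first.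
  by case=> B' [GB' [->|->]]; [|apply: iaut_mul auts _]; apply: Gint_iaut.
move=> /descent [w [Gw Ew]]; have [w' [Gw' ww' w'w]] := Gint_inv Gw.
have {w'w}-> : B = imul w' (imul w B) by rewrite imulA w'w imul1m.
case: Ew => ->; first by exists w'; split=> //; left; rewrite imulm1.
exists (imul (imul (imul s w') s) (imul s iD)); split.
  by apply: Gint_mul => //; apply: Gint_conj.
by right; rewrite !imulA ss imul1m -(imulA w' s s) ss imulm1.
Qed.

Notation jx := (@Ordinal 3 0 isT).
Notation jy := (@Ordinal 3 1 isT).
Notation jz := (@Ordinal 3 2 isT).

Lemma ord3P (P : 'I_3 -> Prop) : P jx -> P jy -> P jz -> forall i, P i.
Proof.
move=> Px Py Pz [[|[|[|//]]] Hi].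
- by rewrite (_ : Ordinal Hi = jx) //; apply: val_inj.
- by rewrite (_ : Ordinal Hi = jy) //; apply: val_inj.
- by rewrite (_ : Ordinal Hi = jz) //; apply: val_inj.
Qed.

Lemma ord2P (P : 'I_2 -> Prop) : P 0 -> P 1 -> forall i, P i.
Proof.
move=> P0 P1 [[|[|//]] Hi].
- by rewrite (_ : Ordinal Hi = 0) //; apply: val_inj.
- by rewrite (_ : Ordinal Hi = 1) //; apply: val_inj.
Qed.

Lemma sum3 (V : nmodType) (f : 'I_3 -> V) : \sum_(i < 3) f i = f jx + f jy + f jz.
Proof.
by rewrite !big_ord_recl big_ord0 addr0 addrA; congr (f _ + f _ + f _); apply: val_inj.
Qed.

Lemma sum2 (V : nmodType) (f : 'I_2 -> V) : \sum_(i < 2) f i = f 0 + f 1.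
Proof. by rewrite !big_ord_recl big_ord0 addr0; congr (f _ + f _); apply: val_inj. Qed.

Section Transfer.
Variable F : fieldType.
Hypothesis charF0 : [pchar F] =i pred0.

Lemma two_neq0 : 2%:R != 0 :> F.
Proof. by rewrite ((pcharf0P F).1 charF0). Qed.

Lemma intrF_eq0 (k : int) : (k%:~R == 0 :> F) = (k == 0).
Proof.
by case: k => n; rewrite ?NegzE ?mulrNz ?oppr_eq0 -pmulrn ((pcharf0P F).1 charF0).
Qed.

Lemma intrF_inj : injective (fun k : int => k%:~R : F).
Proof. by move=> m n /eqP; rewrite -subr_eq0 -intrB intrF_eq0 subr_eq0 => /eqP. Qed.

Definition vec_of (c : 'cV[F]_3) : 'M[F]_2 := \sum_(i < 3) c i 0 *: bas F i.

Lemma vec_ofE c : vec_of c =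
  mx2 (c jx 0 - c jy 0 - c jz 0) (2%:R * c jy 0) (- (2%:R * c jz 0))
      (- c jx 0 + c jy 0 + c jz 0).
Proof.
rewrite /vec_of sum3; apply/matrixP; apply: ord2P; apply: ord2P.
all: by rewrite !mxE /=; ring.
Qed.

Lemma coord_mx2 (a b c d : F) : Defs.coord (mx2 a b c d) =
  \col_i (match val i with
          | 0 => a + b / 2%:R - c / 2%:R | 1 => b / 2%:R | _ => - (c / 2%:R) end).
Proof. by apply/matrixP => -[[|[|[|//]]] ?] -[[|//] ?]; rewrite !mxE. Qed.

Lemma coord_vec_of c : Defs.coord (vec_of c) = c.
Proof.
rewrite vec_ofE coord_mx2; apply/matrixP; apply: ord3P => j; rewrite [j]ord1 !mxE /=.
all: by field; exact: two_neq0.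
Qed.

Lemma vec_of_coord M : in_sl2 M -> vec_of (Defs.coord M) = M.
Proof.
rewrite /in_sl2 /mxtrace sum2 => /eqP; rewrite addr_eq0 => /eqP M11.
rewrite vec_ofE; apply/matrixP; apply: ord2P; apply: ord2P; rewrite !mxE /= ?M11.
all: by field; exact: two_neq0.
Qed.

Definition cbr (c d : 'cV[F]_3) : 'cV[F]_3 :=
  let xy := c jx 0 * d jy 0 - c jy 0 * d jx 0 in
  let yz := c jy 0 * d jz 0 - c jz 0 * d jy 0 in
  let zx := c jz 0 * d jx 0 - c jx 0 * d jz 0 in
  \col_i (2%:R * match val i with 0 => xy + zx | 1 => xy + yz | _ => yz + zx end).

Lemma lie_vec_of c d : lie (vec_of c) (vec_of d) = vec_of (cbr c d).
Proof.
rewrite !vec_ofE /lie; apply/matrixP; apply: ord2P; apply: ord2P.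
all: by rewrite !mxE !sum2 !mxE /=; ring.
Qed.

Lemma in_sl2_vec_of c : in_sl2 (vec_of c).
Proof. by rewrite /in_sl2 /mxtrace sum2 vec_ofE !mxE /=; ring. Qed.

Lemma lin_vec_of A c : lin A (vec_of c) = vec_of (A *m c).
Proof. by rewrite -[lin A _]/(vec_of (A *m Defs.coord (vec_of c))) coord_vec_of. Qed.

Definition preserves_cbr (A : 'M[F]_3) : Prop :=
  forall c d, A *m cbr c d = cbr (A *m c) (A *m d).

Lemma LieAutE A : LieAut A <-> A \in unitmx /\ preserves_cbr A.
Proof.
split=> -[uA HA]; split=> //.
  move=> c d; have := HA _ _ (in_sl2_vec_of c) (in_sl2_vec_of d).
  rewrite lie_vec_of !lin_vec_of lie_vec_of => /(congr1 (@Defs.coord _)).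
  by rewrite !coord_vec_of.
move=> M N HM HN.
by rewrite -(vec_of_coord HM) -(vec_of_coord HN) lie_vec_of !lin_vec_of HA lie_vec_of.
Qed.

Definition ivec_at (u : ivec) (i : 'I_3) : int :=
  match val i with 0 => v0 u | 1 => v1 u | _ => v2 u end.
Definition imat_at (A : imat) (i j : 'I_3) : int :=
  match val i, val j with
  | 0, 0 => m00 A | 0, 1 => m01 A | 0, _ => m02 A
  | 1, 0 => m10 A | 1, 1 => m11 A | 1, _ => m12 A
  | _, 0 => m20 A | _, 1 => m21 A | _, _ => m22 A
  end.
Definition civ (u : ivec) : 'cV[F]_3 := \col_i (ivec_at u i)%:~R.
Definition toF (A : imat) : 'M[F]_3 := \matrix_(i, j) (imat_at A i j)%:~R.
Definition iev (i : 'I_3) : ivec := match val i with 0 => vx | 1 => vy | _ => vz end.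

Lemma toF_mul A B : toF (imul A B) = toF A *m toF B.
Proof.
apply/matrixP; apply: ord3P; apply: ord3P.
all: by rewrite !mxE sum3 !mxE /= !intrD !intrM.
Qed.

Lemma toF_one : toF ione = 1%:M.
Proof. by apply/matrixP; apply: ord3P; apply: ord3P; rewrite !mxE. Qed.

Lemma toF_civ A u : toF A *m civ u = civ (imulv A u).
Proof.
apply/matrixP; apply: ord3P => j; rewrite [j]ord1.
all: by rewrite !mxE sum3 !mxE /= !intrD !intrM.
Qed.

Lemma cbr_civ u w : cbr (civ u) (civ w) = civ (ibr u w).
Proof.
apply/matrixP; apply: ord3P => j; rewrite [j]ord1.
all: by rewrite !mxE /ivec_at /=; ring.
Qed.

Lemma cbrDl c c' d : cbr (c + c') d = cbr c d + cbr c' d.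
Proof. by apply/matrixP; apply: ord3P => j; rewrite [j]ord1 !mxE /=; ring. Qed.
Lemma cbrDr c d d' : cbr c (d + d') = cbr c d + cbr c d'.
Proof. by apply/matrixP; apply: ord3P => j; rewrite [j]ord1 !mxE /=; ring. Qed.
Lemma cbrZl k c d : cbr (k *: c) d = k *: cbr c d.
Proof. by apply/matrixP; apply: ord3P => j; rewrite [j]ord1 !mxE /=; ring. Qed.
Lemma cbrZr k c d : cbr c (k *: d) = k *: cbr c d.
Proof. by apply/matrixP; apply: ord3P => j; rewrite [j]ord1 !mxE /=; ring. Qed.

Lemma col3E (c : 'cV[F]_3) :
  c = c jx 0 *: civ (iev jx) + c jy 0 *: civ (iev jy) + c jz 0 *: civ (iev jz).
Proof. by apply/matrixP; apply: ord3P => j; rewrite [j]ord1 !mxE /=; ring. Qed.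

(* By bilinearity of cbr, it suffices to check preservation on integer vectors. *)
Lemma preserves_cbr_int A :
  (forall u w, A *m cbr (civ u) (civ w) = cbr (A *m civ u) (A *m civ w)) ->
  preserves_cbr A.
Proof.
move=> HA c d; rewrite (col3E c) (col3E d).
by rewrite !mulmxDr -!scalemxAr !cbrDl !cbrDr !cbrZl !cbrZr !mulmxDr -!scalemxAr !HA.
Qed.

Lemma civ_iev j : civ (iev j) = delta_mx j 0.
Proof. by move: j; apply: ord3P; apply/matrixP; apply: ord3P => i; rewrite [i]ord1 !mxE. Qed.

Lemma mx3_ext (M N : 'M[F]_3) : (forall j, M *m civ (iev j) = N *m civ (iev j)) -> M = N.
Proof.
move=> E; apply/matrixP => i j.
by move: (E j); rewrite civ_iev -!colE => /matrixP/(_ i 0); rewrite !mxE.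
Qed.

Lemma civ_inj : injective civ.
Proof.
move=> u w /matrixP E.
have e i : ivec_at u i = ivec_at w i by apply: intrF_inj; move: (E i 0); rewrite !mxE.
case: u w {E} e => ? ? ? [? ? ?] e.
by congr IVec; [apply: (e jx) | apply: (e jy) | apply: (e jz)].
Qed.

Lemma toF_inj : injective toF.
Proof.
move=> A B E; have e j : imulv A (iev j) = imulv B (iev j).
  by apply: civ_inj; rewrite -!toF_civ E.
move: (e jx) (e jy) (e jz); case: A B {E e} => ? ? ? ? ? ? ? ? ? [? ? ? ? ? ? ? ? ?].
by rewrite /imulv /= => -[? ? ?] [? ? ?] [? ? ?]; congr IMat; lia.
Qed.

Definition imat_of_cols (u : 'I_3 -> ivec) : imat :=
  IMat (v0 (u jx)) (v0 (u jy)) (v0 (u jz)) (v1 (u jx)) (v1 (u jy)) (v1 (u jz))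
       (v2 (u jx)) (v2 (u jy)) (v2 (u jz)).

Lemma imat_of_colsE u j : imulv (imat_of_cols u) (iev j) = u j.
Proof.
move: j; apply: ord3P; rewrite /imulv /=; [case: (u jx) | case: (u jy) | case: (u jz)].
all: by move=> ? ? ?; congr IVec; ring.
Qed.

Lemma vec_of_civ u :
  vec_of (civ u) = (v0 u)%:~R *: ex F + (v1 u)%:~R *: ey F + (v2 u)%:~R *: ez F.
Proof. by rewrite /vec_of sum3 !mxE. Qed.

Lemma inLE M : inL M <-> exists u, M = vec_of (civ u).
Proof.
split=> [[a [b [c ->]]] | [[a b c] ->]]; last by exists a, b, c; rewrite vec_of_civ.
by exists (IVec a b c); rewrite vec_of_civ.
Qed.

Lemma lin_civ B u : lin (toF B) (vec_of (civ u)) = vec_of (civ (imulv B u)).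
Proof. by rewrite lin_vec_of toF_civ. Qed.

Theorem AutZE A : AutZ A <-> exists B, A = toF B /\ iaut B.
Proof.
split; last first.
  case=> B [-> [lieB [C [BC CB]]]]; split; [apply/LieAutE; split | split].
  - by case: (@mulmx1_unit _ _ (toF B) (toF C)); rewrite // -toF_mul BC toF_one.
  - by apply: preserves_cbr_int => u w; rewrite cbr_civ !toF_civ lieB cbr_civ.
  - by move=> M /inLE[u ->]; apply/inLE; exists (imulv B u); rewrite lin_civ.
  - move=> N /inLE[w ->]; exists (vec_of (civ (imulv C w))); split.
      by apply/inLE; exists (imulv C w).
    by rewrite lin_civ -imulvA BC imulv1.
case=> /LieAutE[_ presA] [AL LA].
have /fin_all_exists[u Eu] : forall j, exists u, A *m civ (iev j) = civ u.
  move=> j; have /inLE[u Eu] := AL _ ((inLE _).2 (ex_intro _ (iev j) erefl)).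
  by exists u; apply: (can_inj coord_vec_of); rewrite -lin_vec_of.
have /fin_all_exists[c Ec] : forall j, exists c, A *m civ c = civ (iev j).
  move=> j; have [M [/inLE[c ->] EM]] := LA _ ((inLE _).2 (ex_intro _ (iev j) erefl)).
  by exists c; apply: (can_inj coord_vec_of); rewrite -lin_vec_of EM.
have EA : A = toF (imat_of_cols u).
  by apply: mx3_ext => j; rewrite toF_civ imat_of_colsE Eu.
have BC : toF (imat_of_cols u) *m toF (imat_of_cols c) = 1%:M.
  by apply: mx3_ext => j; rewrite -mulmxA toF_civ imat_of_colsE -EA Ec mul1mx.
exists (imat_of_cols u); split=> //; split.
  by move=> v w; apply: civ_inj; rewrite -toF_civ -cbr_civ -EA presA EA !toF_civ cbr_civ.
exists (imat_of_cols c); split; apply: toF_inj; rewrite toF_mul toF_one //.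
exact: mulmx1C.
Qed.

Lemma invmx_right n (A B : 'M[F]_n) : A *m B = 1%:M -> invmx A = B.
Proof.
move=> AB; have [uA _] := mulmx1_unit AB.
by rewrite -[invmx A]mulmx1 -AB mulmxA mulVmx // mul1mx.
Qed.

Lemma invmx_toF B C : imul B C = ione -> invmx (toF B) = toF C.
Proof. by move=> BC; apply: invmx_right; rewrite -toF_mul BC toF_one. Qed.

Lemma bas_vec_of j : bas F j = vec_of (civ (iev j)).
Proof.
rewrite vec_ofE; move: j; apply: ord3P; apply/matrixP; apply: ord2P; apply: ord2P.
all: by rewrite !mxE /=; ring.
Qed.

Lemma ad_mxE a : in_sl2 a ->
  ad_mx a = \matrix_(i, j) cbr (Defs.coord a) (civ (iev j)) i 0.
Proof.
move=> sa; apply/matrixP => i j.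
rewrite /ad_mx /mat_of [LHS]mxE [RHS]mxE bas_vec_of -{1}(vec_of_coord sa).
by rewrite lie_vec_of coord_vec_of.
Qed.

Lemma exp_nilE (N : 'M[F]_3) : exp_nil N = 1%:M + N + 2%:R^-1 *: (N *m N).
Proof. by rewrite /exp_nil sum3 /= expr0 expr1 expr2 invr1 !scale1r. Qed.

Ltac entrywise :=
  apply/matrixP; apply: ord3P; apply: ord3P; rewrite !mxE /ivec_at /iev /imat_at /=.

Lemma in_sl2_mx2 (a b c d : F) : a + d = 0 -> in_sl2 (mx2 a b c d).
Proof. by rewrite /in_sl2 /mxtrace sum2 !mxE. Qed.

Lemma exp_ad_xs : exp_nil (ad_mx (xs F)) = toF (letter_mx LX).
Proof.
rewrite (_ : ad_mx _ = toF (IMat 0 0 0 1 1 (-1) (-1) 1 (-1))).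
  by rewrite exp_nilE -toF_mul; entrywise; field; exact: two_neq0.
rewrite ad_mxE; last by apply: in_sl2_mx2; ring.
by rewrite /xs coord_mx2; entrywise; field; exact: two_neq0.
Qed.

Lemma exp_ad_ys : exp_nil (ad_mx (ys F)) = toF (letter_mx LY).
Proof.
rewrite (_ : ad_mx _ = toF (IMat (-1) (-1) 1 0 0 0 (-1) 1 1)).
  by rewrite exp_nilE -toF_mul; entrywise; field; exact: two_neq0.
rewrite ad_mxE; last by apply: in_sl2_mx2; ring.
by rewrite /ys coord_mx2; entrywise; field; exact: two_neq0.
Qed.

Lemma exp_ad_zs : exp_nil (ad_mx (zs F)) = toF (letter_mx LZ).
Proof.
rewrite (_ : ad_mx _ = toF (IMat 1 (-1) 1 1 (-1) (-1) 0 0 0)).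
  by rewrite exp_nilE -toF_mul; entrywise; field; exact: two_neq0.
rewrite ad_mxE; last by apply: in_sl2_mx2; ring.
by rewrite /zs coord_mx2; entrywise; field; exact: two_neq0.
Qed.

Lemma Ggrp_letter l : Ggrp (toF (letter_mx l)).
Proof.
have Ginv l' : Ggrp (toF (letter_mx l')) -> Ggrp (toF (letter_mx (letter_inv l'))).
  by rewrite -(invmx_toF (letter_invK l').1); apply: gen_inv.
have Gx : Ggrp (toF (letter_mx LX)) by apply: gen_base; left; rewrite exp_ad_xs.
have Gy : Ggrp (toF (letter_mx LY)) by apply: gen_base; right; left; rewrite exp_ad_ys.
have Gz : Ggrp (toF (letter_mx LZ)) by apply: gen_base; right; right; rewrite exp_ad_zs.
by case: l; [exact: Gx | exact: Gy | exact: Gz |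
             exact: Ginv LX Gx | exact: Ginv LY Gy | exact: Ginv LZ Gz].
Qed.

Theorem GgrpE g : Ggrp g <-> exists B, Gint B /\ g = toF B.
Proof.
split; last first.
  case=> B [GB ->]; elim: GB => [|l B' _ IH]; first by rewrite toF_one; apply: gen_one.
  by rewrite toF_mul; apply: gen_mul => //; apply: Ggrp_letter.
elim=> [|a [->|[->|->]]|a _ [B [GB ->]]|a b _ [B [GB ->]] _ [B' [GB' ->]]].
- by exists ione; split; [constructor | rewrite toF_one].
- by exists (letter_mx LX); split; [apply: Gint_letter | rewrite exp_ad_xs].
- by exists (letter_mx LY); split; [apply: Gint_letter | rewrite exp_ad_ys].
- by exists (letter_mx LZ); split; [apply: Gint_letter | rewrite exp_ad_zs].
- have [B' [GB' BB' _]] := Gint_inv GB.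
  by exists B'; split=> //; apply: invmx_toF.
- by exists (imul B B'); split; [apply: Gint_mul | rewrite toF_mul].
Qed.

Lemma coordN (M : 'M[F]_2) : Defs.coord (- M) = - Defs.coord M.
Proof. by apply/matrixP; apply: ord3P => j; rewrite [j]ord1 !mxE /=; ring. Qed.

Lemma neg_swapE u v : neg_swap F u v =
  \matrix_(i, j) - (ivec_at (iev (if j == u then v else if j == v then u else j)) i)%:~R.
Proof.
apply/matrixP => i j.
by rewrite /neg_swap /mat_of [LHS]mxE coordN bas_vec_of coord_vec_of !mxE.
Qed.

Lemma neg_swap_toF u v : u != v -> exists s, complement s /\ neg_swap F u v = toF s.
Proof.
move: u v; apply: ord3P; apply: ord3P => //= _;
  [exists iswap_xy | exists iswap_zx | exists iswap_xy |
   exists iswap_yz | exists iswap_zx | exists iswap_yz].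
all: split; first by [apply: complement_xy | apply: complement_yz | apply: complement_zx].
all: by rewrite neg_swapE; entrywise; ring.
Qed.

Lemma gen_involution (s : 'M[F]_3) : s *m s = 1 ->
  forall h, gen (fun a => a = s) h -> h = 1 \/ h = s.
Proof.
move=> ss h; have invs : invmx s = s by apply: invmx_right.
elim=> [|a ->|a _ [->|->]|a b _ [->|->] _ [->|->]].
all: rewrite ?invmx1 ?invs ?mul1mx ?mulmx1 ?ss; by [left | right].
Qed.
End Transfer.

(* Main theorem: with s = -(u v), Aut_Z(L) = <s> G, <s> meets G trivially and
   s normalises G, i.e. Aut_Z(L) = <s> |x G. *)
Theorem theorem5p6 (F : fieldType) (charF0 : [pchar F] =i pred0)
    (u v : 'I_3) (huv : u != v) :
  let s := neg_swap F u v in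
  let H := gen (fun a => a = s) in
  [/\ s *m s = 1, s != 1,
      (forall A, AutZ A <-> exists h g, H h /\ Ggrp g /\ A = h *m g),
      (forall h, H h -> Ggrp h -> h = 1) &
      (forall h g, H h -> Ggrp g -> Ggrp (invmx h *m g *m h))].
Proof.
have [s [cs ->]] := neg_swap_toF charF0 huv; have [ss _ nGs _ _] := cs.
have ss' : toF F s *m toF F s = 1 by rewrite -toF_mul ss toF_one.
have Hs := gen_involution ss'.
have nG : ~ Ggrp (toF F s).
  by case/(GgrpE charF0)=> B [GB /(toF_inj charF0) E]; apply: nGs; rewrite E.
have GtoF B : Gint B -> Ggrp (toF F B) by move=> GB; apply/(GgrpE charF0); exists B.
split=> //.
- by apply/eqP => E; apply: nG; rewrite E; apply: gen_one.
- move=> A; rewrite (AutZE charF0); split.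
    case=> B [-> /(iaut_decomp _ cs)[B' [GB' [->|->]]]].
      exists 1, (toF F B'); rewrite mul1mx.
      by split; [apply: gen_one | split; [apply: GtoF |]].
    exists (toF F s), (toF F B'); rewrite toF_mul.
    by split; [apply: gen_base | split; [apply: GtoF |]].
  case=> h [g [/Hs[]-> [/(GgrpE charF0)[B [GB ->]] ->]]].
    exists B; rewrite mul1mx; split=> //.
    by apply/(iaut_decomp _ cs); exists B; split; [| left].
  exists (imul s B); rewrite toF_mul; split=> //.
  by apply/(iaut_decomp _ cs); exists B; split; [| right].
- by move=> h /Hs[-> | -> /nG].
- move=> h g /Hs[]-> /(GgrpE charF0)[B [GB ->]].
    by rewrite invmx1 mul1mx mulmx1; apply: GtoF.
  by rewrite (invmx_toF F ss) -!toF_mul; apply/GtoF/Gint_conj.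
Qed.
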